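(* Let $\mathcal{C}$ be a category with a faithful functor $Q:\mathcal{C}\to\mathbf{Set}$ satisfying conditions (1Q) and (2Q) below for an object $A_0$ and an element $x_0\in Q(A_0)$. Then: 1. If $\mu:A\to B$ is a morphism such that $Q(\mu):Q(A)\to Q(B)$ is surjective, then $\mu$ is an epimorphism. 2. A morphism $\mu:A\to B$ is a monomorphism if and only if $Q(\mu)$ is injective. 3. If $\Phi$ is an automorphism of $\mathcal{C}$, then there exists an epimorphism $\eta:A_0\to\Phi(A_0)$; and if such an epimorphism $\eta$ is an isomorphism, then $\Phi$ is potentially inner.
   Context: (1Q): for every object $A$ of $\mathcal{C}$ and every $a\in Q(A)$ there is exactly one morphism $\alpha:A_0\to A$ with $Q(\alpha)(x_0)=a$. (2Q): for every object $A$ of $\mathcal{C}$ there is a morphism $\alpha:A\to A_0$ such that $Q(\alpha):Q(A)\to Q(A_0)$ is surjective. An automorphism $\Phi$ of $\mathcal{C}$ is called potentially inner if there is a family of bijections $s_A:Q(A)\to Q(\Phi(A))$, $A\in\mathrm{Ob}\,\mathcal{C}$, such that $Q(\Phi(\mu))\circ s_A=s_B\circ Q(\mu)$ for every morphism $\mu:A\to B$. *)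

Set Implicit Arguments.
Unset Strict Implicit.

Record Category := {
  Obj :> Type;
  Hom : Obj -> Obj -> Type;
  comp : forall {A B C : Obj}, Hom B C -> Hom A B -> Hom A C;
  idm : forall A : Obj, Hom A A;
  comp_assoc : forall (A B C D : Obj) (f : Hom A B) (g : Hom B C) (h : Hom C D),
      comp h (comp g f) = comp (comp h g) f;
  comp_id_l : forall (A B : Obj) (f : Hom A B), comp (idm B) f = f;
  comp_id_r : forall (A B : Obj) (f : Hom A B), comp f (idm A) = f
}.

Arguments Hom {c} _ _.
Arguments comp {c A B C} _ _.
Arguments idm {c} _.

Record SetFunctor (C : Category) := {
  Qob :> C -> Type;
  Qmor : forall {A B : C}, Hom A B -> Qob A -> Qob B;
  Qmor_id : forall (A : C) (x : Qob A), Qmor (idm A) x = x;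
  Qmor_comp : forall (A B D : C) (f : Hom A B) (g : Hom B D) (x : Qob A),
      Qmor (comp g f) x = Qmor g (Qmor f x)
}.
Arguments Qmor {C} s {A B} _ _.

Record EndoFunctor (C : Category) := {
  Fob :> C -> C;
  Fmor : forall {A B : C}, Hom A B -> Hom (Fob A) (Fob B);
  Fmor_id : forall A : C, Fmor (idm A) = idm (Fob A);
  Fmor_comp : forall (A B D : C) (f : Hom A B) (g : Hom B D),
      Fmor (comp g f) = comp (Fmor g) (Fmor f)
}.
Arguments Fmor {C} e {A B} _.

Definition injectiveF {X Y : Type} (f : X -> Y) := forall x y, f x = f y -> x = y.
Definition surjectiveF {X Y : Type} (f : X -> Y) := forall y, exists x, f x = y.
Definition bijectiveF {X Y : Type} (f : X -> Y) := injectiveF f /\ surjectiveF f.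

Definition faithful (C : Category) (Q : SetFunctor C) : Prop :=
  forall (A B : C) (f g : Hom A B), (forall x, Qmor Q f x = Qmor Q g x) -> f = g.

Definition is_mono (C : Category) (A B : C) (mu : Hom A B) : Prop :=
  forall (D : C) (f g : Hom D A), comp mu f = comp mu g -> f = g.

Definition is_epi (C : Category) (A B : C) (mu : Hom A B) : Prop :=
  forall (D : C) (f g : Hom B D), comp f mu = comp g mu -> f = g.

Definition is_iso (C : Category) (A B : C) (mu : Hom A B) : Prop :=
  exists nu : Hom B A, comp nu mu = idm A /\ comp mu nu = idm B.

Definition is_automorphism (C : Category) (Phi : EndoFunctor C) : Prop :=
  bijectiveF (Fob Phi) /\
  forall A B : C, bijectiveF (fun f : Hom A B => Fmor Phi f).

Definition cond1Q (C : Category) (Q : SetFunctor C) (A0 : C) (x0 : Q A0) : Prop :=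
  forall (A : C) (a : Q A),
    exists alpha : Hom A0 A, Qmor Q alpha x0 = a /\
      forall beta : Hom A0 A, Qmor Q beta x0 = a -> beta = alpha.

Definition cond2Q (C : Category) (Q : SetFunctor C) (A0 : C) : Prop :=
  forall A : C, exists alpha : Hom A A0, surjectiveF (Qmor Q alpha).

Definition potentially_inner (C : Category) (Q : SetFunctor C) (Phi : EndoFunctor C) : Prop :=
  exists s : forall A : C, Q A -> Q (Phi A),
    (forall A : C, bijectiveF (s A)) /\
    forall (A B : C) (mu : Hom A B) (x : Q A),
      Qmor Q (Fmor Phi mu) (s A x) = s B (Qmor Q mu x).
Arguments cond1Q {C} Q A0 x0.
Arguments cond2Q {C} Q A0.
Arguments faithful {C} Q.
Arguments potentially_inner {C} Q Phi.
Arguments is_automorphism {C} Phi.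
Arguments is_mono {C A B} mu.
Arguments is_epi {C A B} mu.
Arguments is_iso {C A B} mu.

(* Condition (1Q) says that [Q] is represented by [(A0, x0)]: evaluation at [x0] is a bijection
   [Hom A0 A ~ Q A], natural in [A].  Hence a mono [mu] has injective [Q mu] (elements of [Q A] are
   morphisms out of [A0]), while faithfulness of [Q] gives the converse and makes maps with
   surjective image epi.  An automorphism [Phi] preserves epis, so applying it to the map
   [B -> A0 = Phi B] given by (2Q) yields an epi [A0 -> Phi A0].  Finally, for an isomorphism
   [eta : A0 -> Phi A0], the composite
   [Q A ~ Hom A0 A ~ Hom (Phi A0) (Phi A) ~ Hom A0 (Phi A) ~ Q (Phi A)]
   (the middle steps being [Phi] and precomposition with [eta]) is a natural bijection. *)
From Stdlib Require Import ClassicalEpsilon.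

Set Implicit Arguments.
Unset Strict Implicit.

Lemma bijectiveF_of_cancel (X Y : Type) (f : X -> Y) (g : Y -> X) :
  (forall x, g (f x) = x) -> (forall y, f (g y) = y) -> bijectiveF f.
Proof.
  intros gK fK. split.
  - intros x y E. rewrite <- (gK x), <- (gK y), E. reflexivity.
  - intros y. exists (g y). apply fK.
Qed.

Lemma bijectiveF_comp (X Y Z : Type) (f : X -> Y) (g : Y -> Z) :
  bijectiveF f -> bijectiveF g -> bijectiveF (fun x => g (f x)).
Proof.
  intros [f_inj f_surj] [g_inj g_surj]. split.
  - intros x y E. apply f_inj, g_inj, E.
  - intros z. destruct (g_surj z) as [y <-]. destruct (f_surj y) as [x <-].
    exists x. reflexivity.
Qed.

Lemma precomp_iso_bijective (C : Category) (A B D : C) (eta : Hom A B) :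
  is_iso eta -> bijectiveF (fun f : Hom B D => comp f eta).
Proof.
  intros [nu [nu_eta eta_nu]].
  apply (bijectiveF_of_cancel (g := fun f : Hom A D => comp f nu)); intros f.
  - rewrite <- comp_assoc, eta_nu. apply comp_id_r.
  - rewrite <- comp_assoc, nu_eta. apply comp_id_r.
Qed.

Lemma Fmor_epi (C : Category) (Phi : EndoFunctor C) (A B : C) (mu : Hom A B) :
  is_automorphism Phi -> is_epi mu -> is_epi (Fmor Phi mu).
Proof.
  intros [[_ Phi_surj] Phi_hom] mu_epi D f g E.
  destruct (Phi_surj D) as [D' <-].
  destruct (proj2 (Phi_hom _ _) f) as [f' <-].
  destruct (proj2 (Phi_hom _ _) g) as [g' <-].
  rewrite <- !Fmor_comp in E.
  rewrite (mu_epi _ _ _ (proj1 (Phi_hom _ _) _ _ E)). reflexivity.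
Qed.

Section FaithfulFunctor.

Variables (C : Category) (Q : SetFunctor C).
Hypothesis Q_faithful : faithful Q.

Lemma epi_of_surjective (A B : C) (mu : Hom A B) : surjectiveF (Qmor Q mu) -> is_epi mu.
Proof.
  intros mu_surj D f g E. apply Q_faithful. intros y.
  destruct (mu_surj y) as [x <-]. rewrite <- !Qmor_comp, E. reflexivity.
Qed.

Lemma mono_of_injective (A B : C) (mu : Hom A B) : injectiveF (Qmor Q mu) -> is_mono mu.
Proof.
  intros mu_inj D f g E. apply Q_faithful. intros x.
  apply mu_inj. rewrite <- !Qmor_comp, E. reflexivity.
Qed.

Lemma epi_to_image (Phi : EndoFunctor C) (A0 : C) :
  is_automorphism Phi -> cond2Q Q A0 -> exists eta : Hom A0 (Phi A0), is_epi eta.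
Proof.
  intros Phi_aut Q2. destruct (proj2 (proj1 Phi_aut) A0) as [B <-].
  destruct (Q2 B) as [alpha alpha_surj].
  exists (Fmor Phi alpha). exact (Fmor_epi Phi_aut (epi_of_surjective alpha_surj)).
Qed.

End FaithfulFunctor.

Section Representation.

Variables (C : Category) (Q : SetFunctor C) (A0 : C) (x0 : Q A0).
Hypothesis Q1 : cond1Q Q A0 x0.

Definition eval_x0 (A : C) (alpha : Hom A0 A) : Q A := Qmor Q alpha x0.

Definition hom_of_elt (A : C) (a : Q A) : Hom A0 A :=
  proj1_sig (constructive_indefinite_description _ (Q1 a)).

Lemma eval_hom_of_elt (A : C) (a : Q A) : eval_x0 (hom_of_elt a) = a.
Proof. exact (proj1 (proj2_sig (constructive_indefinite_description _ (Q1 a)))). Qed.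

Lemma eval_x0_inj (A : C) : injectiveF (@eval_x0 A).
Proof.
  intros alpha beta E.
  destruct (Q1 (eval_x0 beta)) as [gamma [_ gamma_uniq]].
  rewrite (gamma_uniq alpha E), (gamma_uniq beta eq_refl). reflexivity.
Qed.

Lemma hom_of_eval (A : C) (alpha : Hom A0 A) : hom_of_elt (eval_x0 alpha) = alpha.
Proof. apply eval_x0_inj, eval_hom_of_elt. Qed.

Lemma eval_x0_comp (A B : C) (mu : Hom A B) (alpha : Hom A0 A) :
  eval_x0 (comp mu alpha) = Qmor Q mu (eval_x0 alpha).
Proof. apply Qmor_comp. Qed.

Lemma hom_of_elt_natural (A B : C) (mu : Hom A B) (a : Q A) :
  hom_of_elt (Qmor Q mu a) = comp mu (hom_of_elt a).
Proof. rewrite <- (eval_hom_of_elt a) at 1. rewrite <- eval_x0_comp. apply hom_of_eval. Qed.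

Lemma injective_of_mono (A B : C) (mu : Hom A B) : is_mono mu -> injectiveF (Qmor Q mu).
Proof.
  intros mu_mono a b E.
  rewrite <- (eval_hom_of_elt a), <- (eval_hom_of_elt b). f_equal.
  apply mu_mono, eval_x0_inj. rewrite !eval_x0_comp, !eval_hom_of_elt. exact E.
Qed.

Variables (Phi : EndoFunctor C) (eta : Hom A0 (Phi A0)).

Definition transport (A : C) (a : Q A) : Q (Phi A) :=
  eval_x0 (comp (Fmor Phi (hom_of_elt a)) eta).

Lemma transport_natural (A B : C) (mu : Hom A B) (a : Q A) :
  Qmor Q (Fmor Phi mu) (transport a) = transport (Qmor Q mu a).
Proof.
  unfold transport.
  rewrite hom_of_elt_natural, Fmor_comp, <- comp_assoc. symmetry. apply eval_x0_comp.
Qed.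

Lemma transport_bijective (A : C) :
  is_automorphism Phi -> is_iso eta -> bijectiveF (@transport A).
Proof.
  intros [_ Phi_hom] eta_iso. unfold transport.
  apply (bijectiveF_comp (g := @eval_x0 (Phi A))).
  - apply (bijectiveF_comp (f := fun a => Fmor Phi (hom_of_elt a)) (g := fun h => comp h eta)).
    + apply (bijectiveF_comp (f := @hom_of_elt A) (g := fun h => Fmor Phi h)).
      * exact (bijectiveF_of_cancel (eval_hom_of_elt (A := A)) (hom_of_eval (A := A))).
      * apply Phi_hom.
    + apply precomp_iso_bijective, eta_iso.
  - exact (bijectiveF_of_cancel (hom_of_eval (A := Phi A)) (eval_hom_of_elt (A := Phi A))).
Qed.

Lemma potentially_inner_of_iso :
  is_automorphism Phi -> is_iso eta -> potentially_inner Q Phi.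
Proof.
  intros Phi_aut eta_iso. exists transport. split.
  - intros A. apply transport_bijective; assumption.
  - apply transport_natural.
Qed.

End Representation.

Theorem lemma2 (C : Category) (Q : SetFunctor C) (A0 : C) (x0 : Q A0)
  (HQ : faithful Q) (H1 : cond1Q Q A0 x0) (H2 : cond2Q Q A0) :
  (forall (A B : C) (mu : Hom A B), surjectiveF (Qmor Q mu) -> is_epi mu) /\
  (forall (A B : C) (mu : Hom A B), is_mono mu <-> injectiveF (Qmor Q mu)) /\
  (forall Phi : EndoFunctor C, is_automorphism Phi ->
     (exists eta : Hom A0 (Phi A0), is_epi eta) /\
     (forall eta : Hom A0 (Phi A0), is_epi eta -> is_iso eta ->
        potentially_inner Q Phi)).
Proof.
  split; [| split].
  - apply epi_of_surjective, HQ.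
  - intros A B mu. split.
    + apply (injective_of_mono H1).
    + apply mono_of_injective, HQ.
  - intros Phi Phi_aut. split.
    + exact (epi_to_image HQ Phi_aut H2).
    + intros eta _ eta_iso. apply (potentially_inner_of_iso H1 Phi_aut eta_iso).
Qed.
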